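(* Assume $\bar\Phi_p=0$, $\Phi_p^\top\Phi_p=\mathrm{diag}(\sigma_1^2,\dots,\sigma_d^2)$ with all $\sigma_j^2>0$, $\delta>0$, $\lambda\ge0$, and that every entry of $\hat\beta_{\mathrm{ols}}$ is nonzero. Let $\hat\beta^\lambda_{\mathrm{lasso}}$ be the (unique) minimizer of $\|Y_p-\Phi_p\beta\|_2^2+\lambda\|\beta\|_1$ and $I_\lambda:=\{j:\hat\beta^\lambda_{\mathrm{lasso},j}\neq0\}$. Let $\hat\Phi_q^\delta:=\mathcal T_\delta(\bar\Phi_q-\bar\Phi_p)$ be the reweighted features of the $\ell_\infty$ balancing weights with parameter $\delta$, and $I_\delta:=\{j:\hat\Phi^\delta_{q,j}\neq0\}$. Let $\hat\beta_{\ell_\infty}$ be the augmented coefficients obtained with $\hat\beta_{\mathrm{reg}}=\hat\beta^\lambda_{\mathrm{lasso}}$, i.e. with $\Delta_j:=\bar\Phi_{q,j}-\bar\Phi_{p,j}$, $\hat\beta_{\ell_\infty,j}=\hat\beta^\lambda_{\mathrm{lasso},j}$ if $|\Delta_j|<\delta$ and $\hat\beta_{\ell_\infty,j}=|\delta/\Delta_j|\hat\beta^\lambda_{\mathrm{lasso},j}+(1-|\delta/\Delta_j|)\hat\beta_{\mathrm{ols},j}$ otherwise. Then $$\{j:\hat\beta_{\ell_\infty,j}\neq0\}=I_\lambda\cup I_\delta.$$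
   Context: $\Phi_p\in\mathbb{R}^{n\times d}$, $Y_p\in\mathbb{R}^n$, $\Phi_q\in\mathbb{R}^{n\times d}$, column averages $\bar\Phi_p,\bar\Phi_q$. $\hat\beta_{\mathrm{ols}}:=(\Phi_p^\top\Phi_p)^{-1}\Phi_p^\top Y_p$. $\mathcal T_t$ is entrywise soft-thresholding: $\mathcal T_t(z)=0$ if $|z|\le t$, $z-t$ if $z>t$, $z+t$ if $z<-t$. By the preceding result, $\bar\Phi_q\hat\beta_{\ell_\infty}$ equals the lasso outcome model augmented with $\ell_\infty$ balancing weights. *)

From HB Require Import structures.
From mathcomp Require Import all_boot all_order all_algebra.
From mathcomp Require Import reals.
Set Implicit Arguments. Unset Strict Implicit. Unset Printing Implicit Defensive.
Import Order.TTheory GRing.Theory Num.Theory.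
Local Open Scope ring_scope.

Section Defs.
Variable R : realType.

Definition colmean n d (Phi : 'M[R]_(n, d)) : 'rV[R]_d :=
  \row_j ((n%:R)^-1 * \sum_(i < n) Phi i j).

Definition beta_ols n d (Phi : 'M[R]_(n, d)) (Y : 'cV[R]_n) : 'cV[R]_d :=
  invmx (Phi^T *m Phi) *m Phi^T *m Y.

Definition soft_thr (t z : R) : R :=
  if `|z| <= t then 0 else if 0 < z then z - t else z + t.

Definition lasso_obj n d (Phi : 'M[R]_(n, d)) (Y : 'cV[R]_n) (lam : R)
  (b : 'cV[R]_d) : R :=
  \sum_(i < n) ((Y - Phi *m b) i 0) ^+ 2 + lam * \sum_(j < d) `|b j 0|.

Definition beta_linf d (Delta : 'rV[R]_d) (delta : R) (breg bols : 'cV[R]_d)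
  : 'cV[R]_d :=
  \col_j (if `|Delta 0 j| < delta then breg j 0
          else `|delta / Delta 0 j| * breg j 0
               + (1 - `|delta / Delta 0 j|) * bols j 0).

End Defs.

From HB Require Import structures.
From mathcomp Require Import all_boot all_order all_algebra.
From mathcomp Require Import reals.
From mathcomp Require Import ring lra.
Import Order.TTheory GRing.Theory Num.Theory.
Local Open Scope ring_scope.

(* Write g := Phi_p^T Y_p.  Since the Gram matrix Phi_p^T Phi_p = diag(sigma^2)
   is invertible, g_j = sigma_j^2 * beta_ols_j.  Comparing the lasso objective
   at its minimizer b with the same vector whose j-th coordinate is set to 0
   gives 2 b_j g_j >= sigma_j^2 b_j^2 + lam |b_j|, hence b_j * g_j >= 0: each
   lasso coefficient is zero or has the sign of the OLS coefficient.

   The theorem is then coordinatewise.  If |Delta_j| < delta the augmented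
   coefficient is b_j and soft-thresholding kills Delta_j.  If |Delta_j| = delta
   it is again b_j and the threshold is still zero.  If |Delta_j| > delta it is
   a strict convex combination of b_j and beta_ols_j, two numbers of the same
   sign with beta_ols_j <> 0, hence nonzero; and soft-thresholding is nonzero. *)

Lemma soft_thr_neq0 (R : realType) (t z : R) :
  0 < t -> (soft_thr t z != 0) = (t < `|z|).
Proof.
move=> t_gt0; rewrite /soft_thr; have [_|t_lt_z] := leP `|z| t; first by rewrite eqxx.
have [z_gt0|z_le0] := ltP 0 z.
- by rewrite subr_eq0; apply: contraTneq t_lt_z => ->; rewrite gtr0_norm ?ltxx.
- rewrite addr_eq0; apply: contraTneq t_lt_z => ->.
  by rewrite ler0_norm ?opprK ?ltxx // oppr_le0 ltW.
Qed.

Lemma sqnorm_shift (R : comPzRingType) (n : nat) (r c : 'cV[R]_n) (t : R) :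
  \sum_(i < n) ((r + t *: c) i 0) ^+ 2 =
  \sum_(i < n) (r i 0) ^+ 2 + 2 * t * (c^T *m r) 0 0 + t ^+ 2 * (c^T *m c) 0 0.
Proof.
rewrite !mxE mulr_sumr mulr_sumr -!big_split /=.
by apply: eq_bigr => i _; rewrite !mxE; ring.
Qed.

Lemma lasso_obj_drop_coord (R : realType) (n d : nat)
    (Phi : 'M[R]_(n, d)) (Y : 'cV[R]_n) (lam : R) (b : 'cV[R]_d) (j : 'I_d) :
  lasso_obj Phi Y lam (b - b j 0 *: delta_mx j 0) =
  lasso_obj Phi Y lam b + 2 * b j 0 * (Phi^T *m (Y - Phi *m b)) j 0
    + b j 0 ^+ 2 * (Phi^T *m Phi) j j - lam * `|b j 0|.
Proof.
have res : Y - Phi *m (b - b j 0 *: delta_mx j 0) = (Y - Phi *m b) + b j 0 *: col j Phi.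
  by rewrite mulmxBr -scalemxAr -colE opprD opprK addrA.
have l1 : \sum_(k < d) `|(b - b j 0 *: delta_mx j 0) k 0|
          = \sum_(k < d) `|b k 0| - `|b j 0|.
  rewrite [in RHS](bigD1 j) //= (bigD1 j) //= !mxE eqxx mulr1 subrr normr0 add0r.
  rewrite addrAC subrr add0r; apply: eq_bigr => k /negbTE k_neq_j.
  by rewrite !mxE k_neq_j mulr0 subr0.
have colT (m : nat) (M : 'M[R]_(n, m)) (k : 'I_m) :
    ((col j Phi)^T *m M) 0 k = (Phi^T *m M) j k.
  by rewrite tr_col -row_mul mxE.
rewrite /lasso_obj res sqnorm_shift l1 !colT colE mulmxA -colE [col _ _ _ _]mxE; ring.
Qed.

(* Under a diagonal Gram matrix, a lasso minimizer b never has a coordinate of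
   the opposite sign to the marginal correlation (Phi^T Y)_j: removing b_j
   changes the objective by -(2 b_j g_j - s_j b_j^2 - lam |b_j|), which must be
   nonnegative, so 2 b_j g_j >= s_j b_j^2 + lam |b_j| >= 0. *)
Lemma lasso_coord_sign {R : realType} {n d : nat}
    {Phi : 'M[R]_(n, d)} {Y : 'cV[R]_n} {s : 'rV[R]_d} {lam : R}
    {b : 'cV[R]_d} (j : 'I_d) :
  Phi^T *m Phi = diag_mx s -> 0 <= lam ->
  (forall b' : 'cV[R]_d, lasso_obj Phi Y lam b <= lasso_obj Phi Y lam b') ->
  0 <= b j 0 * (Phi^T *m Y) j 0.
Proof.
move=> gram lam_ge0 b_min.
have s_jj : (Phi^T *m Phi) j j = s 0 j by rewrite gram mxE eqxx mulr1n.
have s_ge0 : 0 <= s 0 j.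
  by rewrite -s_jj mxE sumr_ge0 // => i _; rewrite mxE -expr2 sqr_ge0.
have corr : (Phi^T *m (Y - Phi *m b)) j 0 = (Phi^T *m Y) j 0 - s 0 j * b j 0.
  by rewrite mulmxBr mulmxA gram mul_diag_mx !mxE.
have := b_min (b - b j 0 *: delta_mx j 0).
rewrite lasso_obj_drop_coord s_jj corr.
have : 0 <= lam * `|b j 0| by rewrite mulr_ge0.
have : 0 <= s 0 j * b j 0 ^+ 2 by rewrite mulr_ge0 ?sqr_ge0.
nra.
Qed.

Lemma ols_diag_gram {R : realType} {n d : nat}
    {Phi : 'M[R]_(n, d)} (Y : 'cV[R]_n) {s : 'rV[R]_d} (j : 'I_d) :
  Phi^T *m Phi = diag_mx s -> (forall k, s 0 k != 0) ->
  (Phi^T *m Y) j 0 = s 0 j * beta_ols Phi Y j 0.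
Proof.
move=> gram s_neq0.
have gram_unit : diag_mx s \in unitmx.
  by rewrite unitmxE det_diag unitfE; apply/prodf_neq0 => k _.
have normal_eq : diag_mx s *m beta_ols Phi Y = Phi^T *m Y.
  by rewrite /beta_ols gram -!mulmxA mulKVmx.
by rewrite -normal_eq mul_diag_mx mxE.
Qed.

Lemma lasso_ols_same_sign {R : realType} {n d : nat}
    {Phi : 'M[R]_(n, d)} {Y : 'cV[R]_n} {s : 'rV[R]_d} {lam : R}
    {b : 'cV[R]_d} (j : 'I_d) :
  Phi^T *m Phi = diag_mx s -> (forall k, 0 < s 0 k) -> 0 <= lam ->
  (forall b' : 'cV[R]_d, lasso_obj Phi Y lam b <= lasso_obj Phi Y lam b') ->
  0 <= b j 0 * beta_ols Phi Y j 0.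
Proof.
move=> gram s_gt0 lam_ge0 b_min.
have := lasso_coord_sign j gram lam_ge0 b_min.
rewrite (ols_diag_gram Y j gram) => [|k]; last by rewrite gt_eqF.
by rewrite mulrCA pmulr_rge0.
Qed.

Lemma convex_comb_neq0 (R : realFieldType) (a x y : R) :
  0 < a < 1 -> 0 <= x * y -> y != 0 -> a * x + (1 - a) * y != 0.
Proof.
move=> /andP[a_gt0 a_lt1] xy_ge0 y_neq0.
have y2_gt0 : 0 < y * y by rewrite -expr2 exprn_even_gt0.
apply/eqP => comb0.
have : (a * x + (1 - a) * y) * y = 0 by rewrite comb0 mul0r.
nra.
Qed.

Lemma beta_linf_neq0 {R : realType} {d : nat} (Delta : 'rV[R]_d) (delta : R)
    (breg bols : 'cV[R]_d) (j : 'I_d) :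
  0 < delta -> 0 <= breg j 0 * bols j 0 -> bols j 0 != 0 ->
  (beta_linf Delta delta breg bols j 0 != 0) =
  (breg j 0 != 0) || (delta < `|Delta 0 j|).
Proof.
move=> delta_gt0 same_sign bols_neq0; rewrite mxE.
have [small|large] := ltP `|Delta 0 j| delta.
  by rewrite ltNge (ltW small) orbF.
have Delta_gt0 : 0 < `|Delta 0 j| by apply: lt_le_trans large.
have -> : `|delta / Delta 0 j| = delta / `|Delta 0 j|.
  by rewrite normrM normfV gtr0_norm.
move: large; rewrite le_eqVlt => /predU1P[at_threshold|strict].
  rewrite -at_threshold (divff (lt0r_neq0 delta_gt0)).
  by rewrite mul1r subrr mul0r addr0 ltxx orbF.
rewrite strict orbT convex_comb_neq0 // divr_gt0 //=.
by rewrite ltr_pdivrMr // mul1r.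
Qed.

Theorem mainTheorem8 (R : realType) (n d : nat)
  (Phip : 'M[R]_(n, d)) (Yp : 'cV[R]_n) (Phiq : 'M[R]_(n, d))
  (sigma2 : 'rV[R]_d) (delta lam : R) (blasso : 'cV[R]_d) :
  colmean Phip = 0 ->
  Phip^T *m Phip = diag_mx sigma2 ->
  (forall j, 0 < sigma2 0 j) ->
  0 < delta -> 0 <= lam ->
  (forall j, beta_ols Phip Yp j 0 != 0) ->
  (forall b : 'cV[R]_d, lasso_obj Phip Yp lam blasso <= lasso_obj Phip Yp lam b) ->
  let Delta := colmean Phiq - colmean Phip in
  [set j | beta_linf Delta delta blasso (beta_ols Phip Yp) j 0 != 0]
  = [set j | blasso j 0 != 0] :|: [set j | soft_thr delta (Delta 0 j) != 0].
Proof.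
move=> _ gram sigma2_gt0 delta_gt0 lam_ge0 ols_neq0 blasso_min Delta.
apply/setP => j; rewrite !inE soft_thr_neq0 //.
apply: beta_linf_neq0 => //.
exact: lasso_ols_same_sign gram sigma2_gt0 lam_ge0 blasso_min.
Qed.
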